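(* Let $C_h$ be the set of all $\theta \in [\pi/3,\pi/2]$ such that $\theta = \theta(\Gamma)$ for some $\Gamma \in \mathrm{WR}(\Lambda_h)$. Then $\theta \in C_h$ if and only if $$\cos\theta = \frac{1}{2}\cdot\frac{|n^2+2mn-2m^2|}{n^2-mn+m^2}$$ for some $m,n \in \mathbb{Z}$ with $\gcd(m,n)=1$, $1 \le m/n \le 2$ and $3 \nmid (m+n)$. Moreover, for $\theta \in C_h$ and such integers $m,n$ corresponding to $\theta$, let $$\Gamma_\theta = \frac12\begin{bmatrix} m+n & m-2n \\ (m-n)\sqrt3 & m\sqrt3\end{bmatrix}\mathbb{Z}^2 .$$ Then $\Gamma_\theta \subseteq \Lambda_h$, the similarity class $C_h(\theta)$ equals the set of all $\Omega \in \mathrm{WR}(\Lambda_h)$ similar to $\Gamma_\theta$, and for every $\Gamma \in C_h(\theta)$, $$|\Gamma| \ge |\Gamma_\theta| = n^2-mn+m^2, \qquad |\Lambda_h:\Gamma| \ge |\Lambda_h:\Gamma_\theta| = (2m-n)n .$$ Furthermore, $$C_h(\theta) = \{\sqrt{k}\,A\,\Gamma_\theta \subseteq \Lambda_h : k \in \mathbb{Z}_{>0},\ A \in O_2(\mathbb{R})\}.$$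
   Context: $\Lambda_h = \begin{bmatrix} 1 & -1/2 \\ 0 & \sqrt3/2\end{bmatrix}\mathbb{Z}^2 \subset \mathbb{R}^2$ is the hexagonal lattice. For a lattice $\Gamma = A\mathbb{Z}^2\subset\mathbb{R}^2$ of full rank, $\det(\Gamma)=|\det A|$, and its minimum is $|\Gamma| = \min\{\|y\|^2 : y \in \Gamma\setminus\{0\}\}$ (squared Euclidean norm); vectors attaining it are minimal vectors. For a sublattice $\Gamma\subseteq\Lambda_h$ of full rank, $|\Lambda_h:\Gamma| = \det(\Gamma)/\det(\Lambda_h)$. $\Gamma$ is well-rounded (WR) if it has a basis consisting of minimal vectors (a minimal basis); such a minimal basis can always be chosen with angle between the two vectors in $[\pi/3,\pi/2]$, and this angle is an invariant of $\Gamma$, called the angle $\theta(\Gamma)$. $\mathrm{WR}(\Lambda_h)$ denotes the set of WR sublattices of $\Lambda_h$ (of full rank). Two lattices $\Gamma_1,\Gamma_2$ are similar if $\Gamma_2 = \alpha A\Gamma_1$ for some nonzero real $\alpha$ and $A \in O_2(\mathbb{R})$; two WR lattices are similar iff they have the same angle. For $\theta\in C_h$, $C_h(\theta)$ denotes the set of all $\Omega\in\mathrm{WR}(\Lambda_h)$ with $\theta(\Omega)=\theta$. *)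

From Stdlib Require Export Reals ZArith Znumtheory.
Open Scope R_scope.

Definition vec := (R * R)%type.

Definition norm2 (p : vec) : R := fst p * fst p + snd p * snd p.
Definition dot (p q : vec) : R := fst p * fst q + snd p * snd q.
Definition det2 (u v : vec) : R := fst u * snd v - snd u * fst v.

Definition lat (u v : vec) : vec -> Prop :=
  fun p => exists a b : Z, p = (IZR a * fst u + IZR b * fst v,
                                IZR a * snd u + IZR b * snd v).

Definition is_lattice (L : vec -> Prop) : Prop :=
  exists u v, det2 u v <> 0 /\ L = lat u v.

Definition hex : vec -> Prop := lat (1, 0) (-(1/2), sqrt 3 / 2).

Definition subset2 (L M : vec -> Prop) : Prop := forall p, L p -> M p.

(* |L| = r : r is the minimum of squared norms of nonzero vectors of L. *)
Definition lat_min (L : vec -> Prop) (r : R) : Prop :=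
  (exists y, L y /\ y <> (0, 0) /\ norm2 y = r) /\
  (forall y, L y -> y <> (0, 0) -> r <= norm2 y).

Definition minimal_vec (L : vec -> Prop) (y : vec) : Prop :=
  L y /\ y <> (0, 0) /\ (forall z, L z -> z <> (0, 0) -> norm2 y <= norm2 z).

Definition WR (L : vec -> Prop) : Prop :=
  exists u v, det2 u v <> 0 /\ L = lat u v /\ minimal_vec L u /\ minimal_vec L v.

Definition lat_angle (L : vec -> Prop) (th : R) : Prop :=
  exists u v, det2 u v <> 0 /\ L = lat u v /\ minimal_vec L u /\ minimal_vec L v /\
    PI / 3 <= th <= PI / 2 /\
    cos th * (sqrt (norm2 u) * sqrt (norm2 v)) = dot u v.

Definition WR_hex (L : vec -> Prop) : Prop := WR L /\ subset2 L hex.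

Definition C_h (th : R) : Prop :=
  PI / 3 <= th <= PI / 2 /\ exists G, WR_hex G /\ lat_angle G th.

Definition C_h_class (th : R) (L : vec -> Prop) : Prop := WR_hex L /\ lat_angle L th.

Definition orth2 (a b c d : R) : Prop :=
  a * a + c * c = 1 /\ b * b + d * d = 1 /\ a * b + c * d = 0.

Definition lin_image (al a b c d : R) (L : vec -> Prop) : vec -> Prop :=
  fun p => exists q, L q /\
    p = (al * (a * fst q + b * snd q), al * (c * fst q + d * snd q)).

Definition similar (L1 L2 : vec -> Prop) : Prop :=
  exists al a b c d, al <> 0 /\ orth2 a b c d /\ L2 = lin_image al a b c d L1.

(* |Lambda_h : L| = i : det(L)/det(Lambda_h), det(Lambda_h) = sqrt3/2. *)
Definition hex_index (L : vec -> Prop) (i : R) : Prop :=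
  exists u v, det2 u v <> 0 /\ L = lat u v /\ i = Rabs (det2 u v) / (sqrt 3 / 2).

Definition Gamma_th (m n : Z) : vec -> Prop :=
  lat ((IZR m + IZR n) / 2, (IZR m - IZR n) * sqrt 3 / 2)
      ((IZR m - 2 * IZR n) / 2, IZR m * sqrt 3 / 2).

Definition good_pair (th : R) (m n : Z) : Prop :=
  Z.gcd m n = 1%Z /\ n <> 0%Z /\ 1 <= IZR m / IZR n <= 2 /\
  ~ (3 | m + n)%Z /\
  cos th = 1 / 2 * (Rabs (IZR n ^ 2 + 2 * IZR m * IZR n - 2 * IZR m ^ 2)
                    / (IZR n ^ 2 - IZR m * IZR n + IZR m ^ 2)).

From Stdlib Require Import Reals ZArith Znumtheory.
From Stdlib Require Import Lia Lra Psatz FunctionalExtensionality PropExtensionality.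
Open Scope R_scope.

(* Identify Lambda_h with the Eisenstein integers Z[w], w^2 + w + 1 = 0, so that squared
   norms, inner products and determinants of lattice vectors become the integer forms
   [enorm], [edot], [edet].  If [u, v] is a minimal basis of a WR sublattice, of common norm
   N, then N + v conj(u) = conj(u) (u + v) points along the bisector of the basis; its
   primitive part (p, q) determines cos theta, and the substitutions (p, q) -> (q - p, q),
   (p, q) -> (-p, -q) and (m + n, 2m - n) -> (m, n) bring it to a pair (m, n) with
   1 <= m/n <= 2 and 3 not dividing m + n.
   Conversely, gcd (m, n) = 1 and 3 not dividing m + n make the basis u0 = m + (m-n) w,
   v0 = (m-n) + m w of Gamma_theta generate the unit ideal of Z[w].  A basis [u, v] of the
   same angle satisfies u v0 = v u0 (after complex conjugation if the orientations differ),
   which forces u = b u0 and v = b v0 for some b in Z[w].  Multiplication by b is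
   sqrt (N b) times a rotation, so C_h(theta) consists of the lattices sqrt k A Gamma_theta,
   and the bounds on the minimum and on the index follow from k >= 1. *)

(* (a, b) stands for the Eisenstein integer a + b w, where w^2 = -1 - w. *)
Definition eis := (Z * Z)%type.
Definition eadd (x y : eis) : eis := (fst x + fst y, snd x + snd y)%Z.
Definition eopp (x : eis) : eis := (- fst x, - snd x)%Z.
Definition esub (x y : eis) : eis := eadd x (eopp y).
Definition emul (x y : eis) : eis :=
  (fst x * fst y - snd x * snd y, fst x * snd y + snd x * fst y - snd x * snd y)%Z.
Definition e0 : eis := (0, 0)%Z.
Definition e1 : eis := (1, 0)%Z.

Lemma eis_ring : ring_theory e0 e1 eadd emul esub eopp (@eq eis).
Proof.
  constructor; intros; repeat match goal with x : eis |- _ => destruct x end;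
  unfold esub, eadd, emul, eopp, e0, e1; cbn [fst snd]; f_equal; ring.
Qed.
Add Ring EisRing : eis_ring.

Definition ecst (k : Z) : eis := (k, 0%Z).
Definition econj (x : eis) : eis := (fst x - snd x, - snd x)%Z.
Definition enorm (x : eis) : Z := (fst x * fst x - fst x * snd x + snd x * snd x)%Z.
(* Under [emb] below: twice the inner product, and the determinant divided by sqrt 3 / 2. *)
Definition edot (x y : eis) : Z :=
  (2 * fst x * fst y - fst x * snd y - snd x * fst y + 2 * snd x * snd y)%Z.
Definition edet (x y : eis) : Z := (fst x * snd y - snd x * fst y)%Z.

Ltac eis_unfold :=
  repeat match goal with x : eis |- _ => destruct x end;
  unfold esub, eadd, emul, eopp, e0, e1, ecst, econj, enorm, edot, edet in *;
  cbn [fst snd] in *.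

Section EisensteinIntegers.
Local Open Scope Z_scope.

Lemma enorm_mul x y : enorm (emul x y) = enorm x * enorm y.
Proof. eis_unfold; ring. Qed.

Lemma enorm_conj x : enorm (econj x) = enorm x.
Proof. eis_unfold; ring. Qed.

Lemma enorm_opp x : enorm (eopp x) = enorm x.
Proof. eis_unfold; ring. Qed.

Lemma econjK x : econj (econj x) = x.
Proof. eis_unfold; f_equal; ring. Qed.

Lemma emul_conj x : emul x (econj x) = ecst (enorm x).
Proof. eis_unfold; f_equal; ring. Qed.

Lemma enorm_ge0 x : 0 <= enorm x.
Proof. eis_unfold; nia. Qed.

Lemma enorm_eq0 x : enorm x = 0 -> x = e0.
Proof. eis_unfold; intro H; f_equal; nia. Qed.

Lemma enorm_gt0 x : x <> e0 -> 0 < enorm x.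
Proof.
  intro Hx; pose proof (enorm_ge0 x).
  destruct (Z.eq_dec (enorm x) 0) as [E|]; [now apply enorm_eq0 in E|lia].
Qed.

Lemma emul_eq0 x y : emul x y = e0 -> x <> e0 -> y = e0.
Proof.
  intros H Hx; apply enorm_eq0.
  pose proof (enorm_mul x y) as E; rewrite H in E; cbn in E.
  pose proof (enorm_gt0 x Hx); nia.
Qed.

Lemma edot_opp x y : edot x (eopp y) = - edot x y.
Proof. eis_unfold; ring. Qed.
Lemma edet_opp x y : edet x (eopp y) = - edet x y.
Proof. eis_unfold; ring. Qed.
Lemma edot_conj x y : edot (econj x) (econj y) = edot x y.
Proof. eis_unfold; ring. Qed.
Lemma edet_conj x y : edet (econj x) (econj y) = - edet x y.
Proof. eis_unfold; ring. Qed.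

Lemma enorm_edot_edet x y :
  4 * enorm x * enorm y = edot x y * edot x y + 3 * edet x y * edet x y.
Proof. eis_unfold; ring. Qed.

Lemma enorm_comb x y i j :
  enorm (eadd (emul (ecst i) x) (emul (ecst j) y)) =
  i * i * enorm x + j * j * enorm y + i * j * edot x y.
Proof. eis_unfold; ring. Qed.

Lemma edet_comb x y i j :
  edet (eadd (emul (ecst i) x) (emul (ecst j) y)) y = i * edet x y /\
  edet x (eadd (emul (ecst i) x) (emul (ecst j) y)) = j * edet x y.
Proof. eis_unfold; split; ring. Qed.

Lemma comb_neq0 x y i j : edet x y <> 0 -> (i <> 0 \/ j <> 0) ->
  eadd (emul (ecst i) x) (emul (ecst j) y) <> e0.
Proof.
  intros Hd Hij E; destruct (edet_comb x y i j) as [A B]; rewrite E in A, B.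
  replace (edet e0 y) with 0 in A by (eis_unfold; ring).
  replace (edet x e0) with 0 in B by (eis_unfold; ring).
  destruct Hij as [Hi|Hj]; apply Hd; [apply (Z.mul_reg_l _ _ i)|apply (Z.mul_reg_l _ _ j)]; lia.
Qed.

Lemma reduced_enorm_ge x y i j : enorm x = enorm y ->
  Z.abs (edot x y) <= enorm x -> (i <> 0 \/ j <> 0) ->
  enorm x <= enorm (eadd (emul (ecst i) x) (emul (ecst j) y)).
Proof.
  intros Hxy Hd Hij; pose proof (enorm_ge0 x); rewrite enorm_comb, <- Hxy.
  apply Z.abs_le in Hd.
  assert (1 <= i * i + j * j - i * j /\ 1 <= i * i + j * j + i * j) as [A B] by nia.
  destruct (Z.le_ge_cases 0 (i * j)); nia.
Qed.

End EisensteinIntegers.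

Definition ideal2 (u v x : eis) : Prop := exists a b, x = eadd (emul a u) (emul b v).

(* The basis of [Gamma_th m n] is [emb (gam_u m n), emb (gam_v m n)]. *)
Definition gam_u (m n : Z) : eis := (m, m - n)%Z.
Definition gam_v (m n : Z) : eis := (m - n, m)%Z.

Section Ideals.
Local Open Scope Z_scope.

Lemma ideal2_add u v x y : ideal2 u v x -> ideal2 u v y -> ideal2 u v (eadd x y).
Proof. intros [a [b ->]] [c [d ->]]; exists (eadd a c), (eadd b d); ring. Qed.

Lemma ideal2_mul u v c x : ideal2 u v x -> ideal2 u v (emul c x).
Proof. intros [a [b ->]]; exists (emul c a), (emul c b); ring. Qed.

Lemma ideal2_l u v : ideal2 u v u.
Proof. exists e1, e0; ring. Qed.

Lemma ideal2_r u v : ideal2 u v v.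
Proof. exists e0, e1; ring. Qed.

Lemma ideal2_opp_r u v x : ideal2 u v x -> ideal2 u (eopp v) x.
Proof. intros [a [b ->]]; exists a, (eopp b); ring. Qed.

(* [(-1, 1)] is [w - 1], of norm 3, which divides 3. *)
Lemma gam_ideal_lam m n : rel_prime m n -> ideal2 (gam_u m n) (gam_v m n) (-1, 1).
Proof.
  intro Hmn; destruct (rel_prime_bezout _ _ Hmn) as [x y Hxy].
  set (I := ideal2 (gam_u m n) (gam_v m n)).
  assert (HQ : I (ecst (enorm (m, n)))).
  { replace (ecst _) with (emul (econj (gam_u m n)) (gam_u m n))
      by (unfold gam_u; eis_unfold; f_equal; ring).
    apply ideal2_mul, ideal2_l. }
  assert (Hn : I (emul (ecst n) (-1, 1))).
  { replace (emul _ _) with (eadd (gam_v m n) (emul (ecst (-1)) (gam_u m n)))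
      by (unfold gam_u, gam_v; eis_unfold; f_equal; ring).
    apply ideal2_add; [apply ideal2_r|apply ideal2_mul, ideal2_l]. }
  (* [x m + y n = 1] squared gives a Bezout relation between [enorm (m, n)] and [n]. *)
  set (X := x * x); set (Y := 2 * y - y * y * n - x * x * n + x * x * m).
  assert (HXY : X * enorm (m, n) + Y * n = 1).
  { unfold X, Y, enorm; cbn [fst snd].
    assert ((x * m) * (x * m) = (1 - y * n) * (1 - y * n)) by (f_equal; lia). nia. }
  replace (-1, 1) with (eadd (emul (emul (ecst X) (-1, 1)) (ecst (enorm (m, n))))
                             (emul (ecst Y) (emul (ecst n) (-1, 1))))
    by (unfold ecst, emul, eadd; cbn [fst snd]; f_equal; nia).
  apply ideal2_add; apply ideal2_mul; assumption.
Qed.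

Lemma gam_ideal_unit m n : rel_prime m n -> ~ (3 | m + n) ->
  ideal2 (gam_u m n) (gam_v m n) e1.
Proof.
  intros Hmn H3; set (I := ideal2 (gam_u m n) (gam_v m n)).
  pose proof (gam_ideal_lam m n Hmn) as Hlam.
  assert (I3 : I (ecst 3)).
  { replace (ecst 3) with (emul (-2, -1) (-1, 1)) by reflexivity.
    apply ideal2_mul, Hlam. }
  assert (I2mn : I (ecst (2 * m - n))).
  { replace (ecst _) with (eadd (gam_u m n) (emul (ecst (n - m)) (-1, 1)))
      by (unfold gam_u; eis_unfold; f_equal; ring).
    apply ideal2_add; [apply ideal2_l|apply ideal2_mul, Hlam]. }
  assert (Hcop : rel_prime (2 * m - n) 3).
  { apply rel_prime_sym, prime_rel_prime; [exact prime_3|].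
    intros [k Hk]; apply H3; exists (m - k); lia. }
  destruct (rel_prime_bezout _ _ Hcop) as [s t Hst].
  replace e1 with (eadd (emul (ecst s) (ecst (2 * m - n))) (emul (ecst t) (ecst 3)))
    by (unfold ecst, emul, eadd, e1; cbn [fst snd]; f_equal; lia).
  apply ideal2_add; apply ideal2_mul; assumption.
Qed.

Lemma cross_eq_of_shape u v u0 v0 :
  enorm u = enorm v -> enorm u0 = enorm v0 -> u <> e0 -> u0 <> e0 ->
  edot u v * enorm u0 = edot u0 v0 * enorm u ->
  edet u v * enorm u0 = edet u0 v0 * enorm u ->
  emul v u0 = emul v0 u.
Proof.
  intros Hu Hu0 Hnu Hnu0 Hd Ht.
  assert (Hz : emul (emul v (econj u)) (ecst (enorm u0)) =
               emul (emul v0 (econj u0)) (ecst (enorm u))).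
  { revert Hd Ht; eis_unfold; intros Hd Ht; f_equal; nia. }
  assert (H : emul (emul (econj u) (econj u0)) (esub (emul v u0) (emul v0 u)) = e0).
  { transitivity (esub (emul (emul v (econj u)) (emul u0 (econj u0)))
                       (emul (emul v0 (econj u0)) (emul u (econj u)))); [ring|].
    rewrite !emul_conj, Hz; ring. }
  apply emul_eq0 in H.
  - transitivity (eadd (emul v0 u) (esub (emul v u0) (emul v0 u))); [ring|].
    rewrite H; ring.
  - intro E; apply (f_equal enorm) in E.
    rewrite enorm_mul, !enorm_conj in E; cbn in E.
    pose proof (enorm_gt0 u Hnu); pose proof (enorm_gt0 u0 Hnu0); nia.
Qed.

Lemma ideal_unit_cross_mul u v u0 v0 : ideal2 u0 v0 e1 -> u0 <> e0 ->
  emul v u0 = emul v0 u -> exists b, u = emul b u0 /\ v = emul b v0.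
Proof.
  intros [a1 [a2 H1]] Hu0 Hc.
  set (b := eadd (emul a1 u) (emul a2 v)).
  assert (Hbu : u = emul b u0).
  { transitivity (emul u (eadd (emul a1 u0) (emul a2 v0))); [rewrite <- H1; ring|].
    unfold b; transitivity (eadd (emul a1 (emul u u0)) (emul a2 (emul v0 u))); [ring|].
    rewrite <- Hc; ring. }
  exists b; split; [exact Hbu|].
  assert (H : emul u0 (esub v (emul b v0)) = e0).
  { transitivity (esub (emul v u0) (emul v0 (emul b u0))); [ring|].
    rewrite <- Hbu, Hc; ring. }
  apply emul_eq0 in H; [|exact Hu0].
  transitivity (eadd (emul b v0) (esub v (emul b v0))); [ring|]. rewrite H; ring.
Qed.

End Ideals.

Definition cos_num (m n : Z) : Z := (2 * m * m - 2 * m * n - n * n)%Z.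

(* [n * n <= m * n <= 2 * (n * n)] is [1 <= m / n <= 2] without division. *)
Definition admissible (m n : Z) : Prop :=
  rel_prime m n /\ n <> 0%Z /\ (n * n <= m * n <= 2 * (n * n))%Z /\ ~ (3 | m + n)%Z.

Section Normalisation.
Local Open Scope Z_scope.

Lemma coprime_part a b : b <> 0 ->
  exists g p q, g <> 0 /\ a = g * p /\ b = g * q /\ rel_prime p q.
Proof.
  intro Hb; set (g := Z.gcd a b).
  assert (Hg : g <> 0) by (intro E; apply Z.gcd_eq_0 in E; lia).
  destruct (Z.gcd_divide_l a b) as [p Hp]; destruct (Z.gcd_divide_r a b) as [q Hq].
  destruct (Z.gcd_bezout a b g eq_refl) as [x [y Hxy]].
  exists g, p, q; split; [exact Hg|split; [lia|split; [lia|]]].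
  apply bezout_rel_prime, (Bezout_intro _ _ _ x y), (Z.mul_reg_r _ _ g Hg).
  fold g in Hp, Hq; rewrite Hp, Hq in Hxy; lia.
Qed.

(* When [3 | p + q], the pair [(m, n)] with [p = m + n], [q = 2 m - n] describes the
   same angle: both [enorm] and [cos_num] get multiplied by 3 (up to sign). *)
Lemma admissible_of_ratio p q : rel_prime p q -> 0 < q -> q <= p <= 2 * q ->
  exists m n, admissible m n /\
    enorm (p, q) * Z.abs (cos_num m n) = enorm (m, n) * Z.abs (cos_num p q).
Proof.
  intros Hpq Hq Hr; destruct (rel_prime_bezout _ _ Hpq) as [s t Hst].
  destruct (Zdivide_dec 3 (p + q)) as [[j Hj]|H3].
  - assert (0 < 2 * j - q /\ 2 * j - q <= j <= 2 * (2 * j - q)) by lia.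
    exists j, (2 * j - q); split; [split; [|split; [lia|split; [nia|]]]|].
    + apply bezout_rel_prime, (Bezout_intro _ _ _ (s + 2 * t) (s - t)); lia.
    + intros [k Hk]; assert (s * p + t * q = 3 * (s * k + t * (j - k))) by nia; lia.
    + remember (2 * j - q) as n.
      replace p with (j + n) by lia; replace q with (2 * j - n) by lia.
      unfold enorm, cos_num; cbn [fst snd].
      replace (2 * (j + n) * (j + n) - 2 * (j + n) * (2 * j - n) - (2 * j - n) * (2 * j - n))
        with (-3 * (2 * j * j - 2 * j * n - n * n)) by ring.
      rewrite Z.abs_mul; cbn [Z.abs]; ring.
  - exists p, q; split; [split; [|split; [|split]]|]; auto; nia.
Qed.

(* The symmetries [(p, q) -> (-p, -q)] and [(p, q) -> (q - p, q)] preserve the angle. *)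
Lemma admissible_of_cos_num p q : rel_prime p q -> q <> 0 ->
  Z.abs (cos_num p q) <= enorm (p, q) ->
  exists m n, admissible m n /\
    enorm (p, q) * Z.abs (cos_num m n) = enorm (m, n) * Z.abs (cos_num p q).
Proof.
  assert (Hpos : forall p q, rel_prime p q -> 0 < q -> Z.abs (cos_num p q) <= enorm (p, q) ->
    exists m n, admissible m n /\
      enorm (p, q) * Z.abs (cos_num m n) = enorm (m, n) * Z.abs (cos_num p q)).
  { clear p q; intros p q Hpq Hq Hh.
    unfold cos_num, enorm in Hh; cbn [fst snd] in Hh; apply Z.abs_le in Hh.
    destruct (Z.le_gt_cases p 0).
    - replace (enorm (p, q)) with (enorm (q - p, q)) by (unfold enorm; cbn; ring).
      replace (cos_num p q) with (cos_num (q - p) q) by (unfold cos_num; ring).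
      apply admissible_of_ratio; [|lia|nia].
      destruct (rel_prime_bezout _ _ Hpq) as [s t Hst].
      apply bezout_rel_prime, (Bezout_intro _ _ _ (- s) (s + t)); lia.
    - apply admissible_of_ratio; auto; nia. }
  intros Hpq Hq Hh; destruct (proj1 (Z.lt_gt_cases q 0) Hq) as [Hl|Hg]; [|now apply Hpos].
  replace (enorm (p, q)) with (enorm (- p, - q)) by (unfold enorm; cbn; ring).
  replace (cos_num p q) with (cos_num (- p) (- q)) in * by (unfold cos_num; ring).
  apply Hpos; [|lia|unfold enorm in *; cbn in *; lia].
  destruct (rel_prime_bezout _ _ Hpq) as [s t Hst].
  apply bezout_rel_prime, (Bezout_intro _ _ _ (- s) (- t)); lia.
Qed.

Lemma bisector_cos_num u v X Y : enorm u = enorm v -> edet u v <> 0 ->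
  emul v (econj u) = (X, Y) ->
  edot u v * enorm (enorm u + X, Y) = enorm u * cos_num (enorm u + X) Y /\ Y <> 0.
Proof.
  intros Huv Ht Hw.
  assert (HN : enorm (X, Y) = enorm u * enorm u)
    by (rewrite <- Hw, enorm_mul, enorm_conj; lia).
  assert (Hd : edot u v = 2 * X - Y /\ Y = edet u v)
    by (revert Hw; eis_unfold; intro Hw; injection Hw; lia).
  destruct Hd as [Hd HY]; rewrite Hd; split; [|lia].
  set (N := enorm u) in *; unfold enorm in HN |- *; unfold cos_num; cbn [fst snd] in *.
  transitivity (N * (2 * (N + X) * (N + X) - 2 * (N + X) * Y - Y * Y)
                + (2 * X - Y + 2 * N) * (X * X - X * Y + Y * Y - N * N)); [ring|].
  rewrite HN; ring.
Qed.

Lemma reduced_basis_admissible u v : enorm u = enorm v -> 0 < enorm u ->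
  edet u v <> 0 -> 0 <= edot u v <= enorm u ->
  exists m n, admissible m n /\ edot u v * enorm (m, n) = enorm u * Z.abs (cos_num m n).
Proof.
  intros Huv HN Ht Hd.
  destruct (emul v (econj u)) as [X Y] eqn:Hw.
  destruct (bisector_cos_num u v X Y Huv Ht Hw) as [Key HY].
  set (N := enorm u) in *; set (D := edot u v) in *.
  destruct (coprime_part (N + X) Y HY) as [g [p [q [Hg [Hp [Hq Hpq]]]]]].
  rewrite Hp, Hq in Key.
  assert (K : D * enorm (p, q) = N * cos_num p q).
  { apply (Z.mul_reg_r _ _ (g * g)); [nia|].
    unfold enorm, cos_num in *; cbn [fst snd] in *; lia. }
  assert (Hq0 : q <> 0) by (intro; subst; lia).
  assert (Hn : 0 < enorm (p, q)) by (apply enorm_gt0; intro E; inversion E; lia).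
  assert (Hh : 0 <= cos_num p q <= enorm (p, q)) by nia.
  destruct (admissible_of_cos_num p q Hpq Hq0) as [m [n [Hadm Hr]]];
    [rewrite Z.abs_eq; lia|].
  exists m, n; split; [exact Hadm|].
  rewrite (Z.abs_eq (cos_num p q)) in Hr by lia.
  apply (Z.mul_reg_l _ _ (enorm (p, q))); [lia|].
  rewrite Z.mul_assoc, (Z.mul_comm _ D), K; nia.
Qed.

End Normalisation.

Definition lin_map (al a b c d : R) (p : vec) : vec :=
  (al * (a * fst p + b * snd p), al * (c * fst p + d * snd p)).

Lemma pred_ext (A B : vec -> Prop) : (forall p, A p <-> B p) -> A = B.
Proof.
  intro H; apply functional_extensionality; intro p; apply propositional_extensionality, H.
Qed.

Lemma lat_l u v : lat u v u.
Proof. exists 1%Z, 0%Z; destruct u; cbn; f_equal; ring. Qed.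

Lemma lat_r u v : lat u v v.
Proof. exists 0%Z, 1%Z; destruct v; cbn; f_equal; ring. Qed.

Lemma lat_opp_r u v : lat u (- fst v, - snd v) = lat u v.
Proof.
  apply pred_ext; intro p; split; intros [i [j ->]]; exists i, (- j)%Z;
    cbn [fst snd]; rewrite opp_IZR; f_equal; ring.
Qed.

Lemma det2_lat u v x y : lat u v x -> lat u v y ->
  exists k : Z, det2 x y = IZR k * det2 u v.
Proof.
  intros [i1 [j1 ->]] [i2 [j2 ->]]; exists (i1 * j2 - j1 * i2)%Z.
  unfold det2; cbn [fst snd]; rewrite minus_IZR, !mult_IZR; ring.
Qed.

Lemma norm2_gt0 x : x <> (0, 0) -> 0 < norm2 x.
Proof.
  destruct x as [x1 x2]; unfold norm2; cbn [fst snd]; intro H.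
  destruct (Req_dec x1 0), (Req_dec x2 0); subst; [now contradiction H|nra..].
Qed.

Lemma lin_image_lat al a b c d u v :
  lin_image al a b c d (lat u v) = lat (lin_map al a b c d u) (lin_map al a b c d v).
Proof.
  apply pred_ext; intro x; split.
  - intros [y [[i [j ->]] ->]]; exists i, j; unfold lin_map; cbn [fst snd]; f_equal; ring.
  - intros [i [j ->]]; eexists; split; [exists i, j; reflexivity|].
    unfold lin_map; cbn [fst snd]; f_equal; ring.
Qed.

Lemma orth2_det_sq a b c d : orth2 a b c d -> (a * d - b * c) * (a * d - b * c) = 1.
Proof.
  intros [h1 [h2 h3]].
  transitivity ((a * a + c * c) * (b * b + d * d) - (a * b + c * d) * (a * b + c * d));
    [ring|].
  rewrite h1, h2, h3; ring.
Qed.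

Lemma dot_lin al a b c d x y : orth2 a b c d ->
  dot (lin_map al a b c d x) (lin_map al a b c d y) = al * al * dot x y.
Proof.
  intros [h1 [h2 h3]]; destruct x as [x1 x2], y as [y1 y2]; unfold dot, lin_map; cbn [fst snd].
  transitivity (al * al * (x1 * y1 * (a * a + c * c) + x2 * y2 * (b * b + d * d)
                           + (x1 * y2 + x2 * y1) * (a * b + c * d))); [ring|].
  rewrite h1, h2, h3; ring.
Qed.

Lemma norm2_lin al a b c d x : orth2 a b c d ->
  norm2 (lin_map al a b c d x) = al * al * norm2 x.
Proof. exact (dot_lin al a b c d x x). Qed.

Lemma det2_lin al a b c d x y :
  det2 (lin_map al a b c d x) (lin_map al a b c d y) = al * al * (a * d - b * c) * det2 x y.
Proof. destruct x, y; unfold det2, lin_map; cbn [fst snd]; ring. Qed.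

Lemma lat_angle_WR L th : lat_angle L th -> WR L.
Proof. intros [u [v [Hd [HL [Hu [Hv _]]]]]]; exists u, v; tauto. Qed.

Section Similarity.
Variables (al a b c d : R).
Hypotheses (Hal : al <> 0) (Ho : orth2 a b c d).

Lemma lin_map_eq0 x : lin_map al a b c d x = (0, 0) <-> x = (0, 0).
Proof.
  split; [|intros ->; unfold lin_map; cbn; f_equal; ring].
  intro E; pose proof (norm2_lin al a b c d x Ho) as N; rewrite E in N.
  assert (Hal2 : 0 < al * al) by (pose proof (Rsqr_pos_lt al Hal); unfold Rsqr in *; lra).
  destruct x as [x1 x2]; unfold norm2 in N; cbn [fst snd] in N.
  assert (x1 * x1 + x2 * x2 = 0) by nra.
  f_equal; nra.
Qed.

Lemma minimal_vec_lin_image L w :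
  minimal_vec L w -> minimal_vec (lin_image al a b c d L) (lin_map al a b c d w).
Proof.
  intros [Lw [Hw0 Hmin]]; split; [exists w; now split|].
  split; [now rewrite lin_map_eq0|].
  intros z [q [Lq ->]] Hz0; fold (lin_map al a b c d q) in Hz0 |- *.
  rewrite !norm2_lin by exact Ho; apply Rmult_le_compat_l; [nra|].
  apply Hmin; [exact Lq|]; now rewrite <- lin_map_eq0.
Qed.

Lemma lat_angle_lin_image L th : lat_angle L th -> lat_angle (lin_image al a b c d L) th.
Proof.
  intros [u [v [Hdet [HL [Hu [Hv [Hth Hcos]]]]]]].
  exists (lin_map al a b c d u), (lin_map al a b c d v).
  pose proof (minimal_vec_lin_image L u Hu) as Hu'.
  pose proof (minimal_vec_lin_image L v Hv) as Hv'.
  rewrite HL in Hu', Hv' |- *; rewrite lin_image_lat in *.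
  repeat split; try apply Hu'; try apply Hv'; try apply Hth.
  - rewrite det2_lin; pose proof (orth2_det_sq a b c d Ho) as Hk.
    assert (a * d - b * c <> 0) by (intro K; rewrite K in Hk; lra).
    repeat apply Rmult_integral_contrapositive_currified; assumption.
  - rewrite !norm2_lin, dot_lin, <- Hcos by exact Ho.
    assert (0 <= norm2 u /\ 0 <= norm2 v) as [Hnu Hnv]
      by (unfold norm2; split; nra).
    rewrite (sqrt_mult_alt _ (norm2 u)), (sqrt_mult_alt _ (norm2 v)) by nra.
    generalize (sqrt_sqrt (al * al) ltac:(nra)); generalize (sqrt (al * al)).
    intros s Hs; rewrite <- Hs; ring.
Qed.

End Similarity.

Lemma sqrt3_sq : sqrt 3 * sqrt 3 = 3.
Proof. apply sqrt_sqrt; lra. Qed.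

Lemma sqrt3_pos : 0 < sqrt 3.
Proof. apply sqrt_lt_R0; lra. Qed.

Definition emb (z : eis) : vec := (IZR (fst z) - IZR (snd z) / 2, IZR (snd z) * sqrt 3 / 2).

Ltac push_IZR := repeat first [rewrite plus_IZR | rewrite minus_IZR | rewrite mult_IZR
                               | rewrite opp_IZR].
Ltac field_sqrt3 := generalize sqrt3_sq; generalize (sqrt 3); intros ?s ?Hs; field [Hs].

Lemma norm2_emb z : norm2 (emb z) = IZR (enorm z).
Proof. destruct z; unfold norm2, emb, enorm; cbn [fst snd]; push_IZR; field_sqrt3. Qed.

Lemma dot_emb z w : dot (emb z) (emb w) = IZR (edot z w) / 2.
Proof. destruct z, w; unfold dot, emb, edot; cbn [fst snd]; push_IZR; field_sqrt3. Qed.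

Lemma det2_emb z w : det2 (emb z) (emb w) = IZR (edet z w) * sqrt 3 / 2.
Proof. destruct z, w; unfold det2, emb, edet; cbn [fst snd]; push_IZR; field_sqrt3. Qed.

Lemma det2_emb_neq0 z w : det2 (emb z) (emb w) <> 0 <-> edet z w <> 0%Z.
Proof.
  rewrite det2_emb; pose proof sqrt3_pos; split; intros Hne E; apply Hne.
  - rewrite E; lra.
  - apply eq_IZR; nra.
Qed.

Lemma emb_mul b z : emb (emul b z) =
  (fst (emb b) * fst (emb z) - snd (emb b) * snd (emb z),
   snd (emb b) * fst (emb z) + fst (emb b) * snd (emb z)).
Proof. destruct b, z; unfold emb, emul; cbn [fst snd]; push_IZR; f_equal; field_sqrt3. Qed.

Lemma emb_conj z : emb (econj z) = (fst (emb z), - snd (emb z)).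
Proof. destruct z; unfold emb, econj; cbn [fst snd]; push_IZR; f_equal; field. Qed.

Lemma emb_opp z : emb (eopp z) = (- fst (emb z), - snd (emb z)).
Proof. destruct z; unfold emb, eopp; cbn [fst snd]; push_IZR; f_equal; field. Qed.

Lemma emb_eq0 z : emb z = (0, 0) <-> z = e0.
Proof.
  split; [|intros ->; unfold emb, e0; cbn [fst snd]; f_equal; field].
  intro H; apply enorm_eq0, eq_IZR; rewrite <- norm2_emb, H; unfold norm2; cbn; ring.
Qed.

Lemma lat_emb x y p : lat (emb x) (emb y) p <->
  exists i j, p = emb (eadd (emul (ecst i) x) (emul (ecst j) y)).
Proof.
  split; intros [i [j ->]]; exists i, j; destruct x, y; unfold emb, eadd, emul, ecst;
  cbn [fst snd]; push_IZR; f_equal; field_sqrt3.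
Qed.

Lemma hex_emb p : hex p <-> exists z, p = emb z.
Proof.
  unfold hex; split.
  - intros [a [b ->]]; exists (a, b); unfold emb; cbn [fst snd]; f_equal; field.
  - intros [[a b] ->]; exists a, b; unfold emb; cbn [fst snd]; f_equal; field.
Qed.

Lemma subset2_lat_emb x y : subset2 (lat (emb x) (emb y)) hex.
Proof. intros p Hp; apply lat_emb in Hp; destruct Hp as [i [j ->]]; apply hex_emb; eauto. Qed.

Lemma reduced_minimal_vec x y : enorm x = enorm y -> (0 < enorm x)%Z ->
  (Z.abs (edot x y) <= enorm x)%Z -> edet x y <> 0%Z ->
  minimal_vec (lat (emb x) (emb y)) (emb x) /\ minimal_vec (lat (emb x) (emb y)) (emb y).
Proof.
  intros Hxy Hx Hd Ht.
  assert (Hne : forall z, z <> e0 -> emb z <> (0, 0)) by (intros z Hz E; now apply emb_eq0 in E).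
  assert (K : forall p, lat (emb x) (emb y) p -> p <> (0, 0) -> IZR (enorm x) <= norm2 p).
  { intros p Hp Hp0; apply lat_emb in Hp; destruct Hp as [i [j ->]].
    rewrite norm2_emb; apply IZR_le, reduced_enorm_ge; auto.
    destruct (Z.eq_dec i 0), (Z.eq_dec j 0); try tauto; subst.
    exfalso; apply Hp0, emb_eq0; eis_unfold; f_equal; ring. }
  assert (Hx0 : x <> e0) by (intros ->; cbn in Hx; lia).
  assert (Hy0 : y <> e0) by (intros ->; cbn in Hxy; lia).
  split; (split; [apply lat_l || apply lat_r|split; [now apply Hne|]]);
    intros p Hp Hp0; rewrite norm2_emb; [|rewrite <- Hxy]; now apply K.
Qed.

Lemma admissible_bounds m n : admissible m n ->
  (0 < enorm (m, n))%Z /\ (Z.abs (cos_num m n) <= enorm (m, n))%Z /\ (0 < n * (2 * m - n))%Z.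
Proof.
  intros [_ [Hn [Hr _]]]; unfold enorm, cos_num; cbn [fst snd].
  assert (0 <= (m - n) * (2 * n - m))%Z.
  { assert (0 <= (m * n - n * n) * (2 * (n * n) - m * n))%Z by nia.
    assert ((m * n - n * n) * (2 * (n * n) - m * n) = (n * n) * ((m - n) * (2 * n - m)))%Z
      by ring.
    nia. }
  split; [nia|split; [apply Z.abs_le; split|]]; nia.
Qed.

Lemma ratio_bounds_iff m n : n <> 0%Z ->
  (1 <= IZR m / IZR n <= 2 <-> (n * n <= m * n <= 2 * (n * n))%Z).
Proof.
  intro Hn; apply not_0_IZR in Hn.
  set (t := IZR m / IZR n); assert (Hm : IZR m = t * IZR n) by (unfold t; field; exact Hn).
  assert (0 < IZR n * IZR n) by (pose proof (Rsqr_pos_lt _ Hn); unfold Rsqr in *; lra).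
  split.
  - intros [h1 h2]; split; apply le_IZR; rewrite !mult_IZR, Hm; nra.
  - intros [h1 h2]; apply IZR_le in h1, h2.
    rewrite !mult_IZR in h1; rewrite !mult_IZR in h2; rewrite Hm in h1, h2; split; nra.
Qed.

Lemma cos_formula_iff th m n : n <> 0%Z ->
  cos th = 1 / 2 * (Rabs (IZR n ^ 2 + 2 * IZR m * IZR n - 2 * IZR m ^ 2)
                    / (IZR n ^ 2 - IZR m * IZR n + IZR m ^ 2)) <->
  cos th * IZR (enorm (m, n)) = IZR (Z.abs (cos_num m n)) / 2.
Proof.
  intro Hn.
  replace (IZR n ^ 2 + 2 * IZR m * IZR n - 2 * IZR m ^ 2) with (- IZR (cos_num m n))
    by (unfold cos_num; push_IZR; ring).
  replace (IZR n ^ 2 - IZR m * IZR n + IZR m ^ 2) with (IZR (enorm (m, n)))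
    by (unfold enorm; cbn [fst snd]; push_IZR; ring).
  rewrite Rabs_Ropp, <- abs_IZR.
  assert (Hq : 0 < IZR (enorm (m, n)))
    by (apply IZR_lt, enorm_gt0; intro E; inversion E; contradiction).
  split; intro H.
  - rewrite H; field; lra.
  - apply (Rmult_eq_reg_r (IZR (enorm (m, n)))); [rewrite H; field|]; lra.
Qed.

Lemma good_pair_iff th m n : good_pair th m n <->
  admissible m n /\ cos th * IZR (enorm (m, n)) = IZR (Z.abs (cos_num m n)) / 2.
Proof.
  unfold good_pair, admissible; rewrite Zgcd_1_rel_prime.
  split.
  - intros [Hg [Hn [Hr [H3 Hc]]]].
    rewrite ratio_bounds_iff, cos_formula_iff in * by exact Hn; tauto.
  - intros [[Hg [Hn [Hr H3]]] Hc].
    rewrite ratio_bounds_iff, cos_formula_iff by exact Hn; tauto.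
Qed.

Lemma good_pair_admissible th m n : good_pair th m n -> admissible m n.
Proof. now intros [Hadm _]%good_pair_iff. Qed.

Lemma hex_sublattice_basis L th : subset2 L hex -> lat_angle L th ->
  PI / 3 <= th <= PI / 2 /\
  exists u v, L = lat (emb u) (emb v) /\ edet u v <> 0%Z /\ enorm u = enorm v /\
    (0 < enorm u)%Z /\ (0 <= edot u v <= enorm u)%Z /\
    cos th * IZR (enorm u) = IZR (edot u v) / 2.
Proof.
  intros Hsub [x [y [Hdet [HL [[Lx [Hx0 Hmx]] [[Ly [Hy0 Hmy]] [Hth Hcos]]]]]]].
  split; [exact Hth|].
  destruct (proj1 (hex_emb x) (Hsub x Lx)) as [u ->].
  destruct (proj1 (hex_emb y) (Hsub y Ly)) as [v ->].
  assert (Hne : forall z, emb z <> (0, 0) -> z <> e0) by (intros z Hz ->; now apply Hz, emb_eq0).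
  pose proof (Hmx _ Ly Hy0) as A; pose proof (Hmy _ Lx Hx0) as B.
  rewrite !norm2_emb in A, B; apply le_IZR in A, B.
  assert (Huv : enorm u = enorm v) by lia.
  assert (Hu : (0 < enorm u)%Z) by now apply enorm_gt0, Hne.
  assert (Hc : cos th * IZR (enorm u) = IZR (edot u v) / 2).
  { rewrite <- dot_emb, <- Hcos, !norm2_emb, <- Huv, sqrt_sqrt; [reflexivity|].
    apply IZR_le; lia. }
  exists u, v; split; [exact HL|]; split; [now apply det2_emb_neq0|].
  split; [exact Huv|]; split; [exact Hu|]; split; [|exact Hc].
  assert (0 <= cos th) by (apply cos_ge_0; pose proof PI_RGT_0; lra).
  split; [apply le_IZR; apply IZR_lt in Hu; nra|].
  assert (Hmin : (enorm u <= enorm (eadd (emul (ecst 1) u) (emul (ecst (-1)) v)))%Z).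
  { apply le_IZR; rewrite <- !norm2_emb; apply Hmx.
    - rewrite HL; apply lat_emb; eauto.
    - rewrite emb_eq0; apply comb_neq0; [now apply det2_emb_neq0|lia]. }
  rewrite enorm_comb in Hmin; lia.
Qed.

(* [gam_v m n] or its opposite, whichever makes the angle of the basis at most [PI / 2]. *)
Definition gam_w (m n : Z) : eis :=
  if (0 <=? cos_num m n)%Z then gam_v m n else eopp (gam_v m n).

Lemma Gamma_th_emb m n : Gamma_th m n = lat (emb (gam_u m n)) (emb (gam_w m n)).
Proof.
  assert (E : Gamma_th m n = lat (emb (gam_u m n)) (emb (gam_v m n))).
  { unfold Gamma_th, gam_u, gam_v, emb; cbn [fst snd]; f_equal; f_equal; push_IZR; field. }
  unfold gam_w; destruct (0 <=? cos_num m n)%Z; [exact E|].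
  now rewrite emb_opp, lat_opp_r.
Qed.

Lemma gam_w_shape m n :
  enorm (gam_u m n) = enorm (m, n) /\ enorm (gam_w m n) = enorm (m, n) /\
  edot (gam_u m n) (gam_w m n) = Z.abs (cos_num m n) /\
  Z.abs (edet (gam_u m n) (gam_w m n)) = Z.abs (n * (2 * m - n)).
Proof.
  assert (Hv : enorm (gam_v m n) = enorm (m, n) /\
               edot (gam_u m n) (gam_v m n) = cos_num m n /\
               edet (gam_u m n) (gam_v m n) = (n * (2 * m - n))%Z)
    by (unfold gam_u, gam_v, enorm, edot, edet, cos_num; cbn [fst snd]; repeat split; ring).
  destruct Hv as [Hv [Hd Ht]].
  split; [unfold gam_u, enorm; cbn [fst snd]; ring|].
  unfold gam_w; destruct (Z.leb_spec 0 (cos_num m n)).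
  - rewrite Hd, Ht, Z.abs_eq by lia; tauto.
  - rewrite enorm_opp, edot_opp, edet_opp, Z.abs_opp, Hd, Ht, Z.abs_neq by lia; tauto.
Qed.

Lemma gam_w_ideal_unit m n : admissible m n -> ideal2 (gam_u m n) (gam_w m n) e1.
Proof.
  intros [Hmn [_ [_ H3]]]; pose proof (gam_ideal_unit m n Hmn H3).
  unfold gam_w; destruct (0 <=? cos_num m n)%Z; [assumption|now apply ideal2_opp_r].
Qed.

Lemma Gamma_minimal_basis m n : admissible m n ->
  edet (gam_u m n) (gam_w m n) <> 0%Z /\
  minimal_vec (Gamma_th m n) (emb (gam_u m n)) /\ minimal_vec (Gamma_th m n) (emb (gam_w m n)).
Proof.
  intro Hadm; destruct (admissible_bounds m n Hadm) as [HQ [Hh Hi]].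
  destruct (gam_w_shape m n) as [Hu [Hw [Hd Ht]]].
  assert (Ht0 : edet (gam_u m n) (gam_w m n) <> 0%Z)
    by (intro E; rewrite E in Ht; lia).
  split; [exact Ht0|]; rewrite Gamma_th_emb; apply reduced_minimal_vec; lia.
Qed.

Lemma Gamma_lat_angle th m n : PI / 3 <= th <= PI / 2 -> good_pair th m n ->
  lat_angle (Gamma_th m n) th.
Proof.
  intros Hth Hgood; apply good_pair_iff in Hgood as [Hadm Hc].
  destruct (Gamma_minimal_basis m n Hadm) as [Ht0 [Mu Mw]].
  destruct (gam_w_shape m n) as [Hu [Hw [Hd _]]].
  exists (emb (gam_u m n)), (emb (gam_w m n)).
  split; [now apply det2_emb_neq0|split; [apply Gamma_th_emb|]].
  do 3 (split; [assumption|]).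
  rewrite !norm2_emb, dot_emb, Hu, Hw, Hd, sqrt_sqrt; [exact Hc|].
  apply IZR_le, enorm_ge0.
Qed.

Section Multiplier.
Variable b : eis.
Hypothesis Hb : b <> e0.

Let r := sqrt (IZR (enorm b)).
Let X := fst (emb b) / r.
Let Y := snd (emb b) / r.

Lemma multiplier_coeffs : 0 < r /\ X * X + Y * Y = 1.
Proof.
  assert (Hn : 0 < IZR (enorm b)) by now apply IZR_lt, enorm_gt0.
  assert (Hr : 0 < r) by now apply sqrt_lt_R0.
  split; [exact Hr|].
  pose proof (norm2_emb b) as N; unfold norm2 in N.
  assert (Hrr : r * r = IZR (enorm b)) by (apply sqrt_sqrt; lra).
  transitivity ((fst (emb b) * fst (emb b) + snd (emb b) * snd (emb b)) / (r * r));
    [unfold X, Y; field; lra|].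
  rewrite N, Hrr; field; lra.
Qed.

Lemma emul_similar x y : exists a c d e, orth2 a c d e /\
  lat (emb (emul b x)) (emb (emul b y)) = lin_image r a c d e (lat (emb x) (emb y)).
Proof.
  destruct multiplier_coeffs as [Hr HXY].
  assert (Hz : forall z, lin_map r X (- Y) Y X (emb z) = emb (emul b z)).
  { intro z; rewrite emb_mul; unfold lin_map, X, Y; f_equal; field; lra. }
  exists X, (- Y), Y, X; split; [unfold orth2; repeat split; lra|].
  now rewrite lin_image_lat, !Hz.
Qed.

Lemma conj_emul_similar x y : exists a c d e, orth2 a c d e /\
  lat (emb (econj (emul b x))) (emb (econj (emul b y))) =
  lin_image r a c d e (lat (emb x) (emb y)).
Proof.
  destruct multiplier_coeffs as [Hr HXY].
  assert (Hz : forall z, lin_map r X (- Y) (- Y) (- X) (emb z) = emb (econj (emul b z))).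
  { intro z; rewrite emb_conj, emb_mul; unfold lin_map, X, Y; cbn [fst snd]; f_equal; field; lra. }
  exists X, (- Y), (- Y), (- X); split; [unfold orth2; repeat split; lra|].
  now rewrite lin_image_lat, !Hz.
Qed.

End Multiplier.

Lemma same_angle_multiple u v u0 v0 : ideal2 u0 v0 e1 ->
  enorm u = enorm v -> enorm u0 = enorm v0 -> (0 < enorm u)%Z -> (0 < enorm u0)%Z ->
  (edot u v * enorm u0 = edot u0 v0 * enorm u)%Z ->
  exists b, (u = emul b u0 /\ v = emul b v0) \/
            (u = econj (emul b u0) /\ v = econj (emul b v0)).
Proof.
  intros Hunit Huv Hu0v0 Hu Hu0 Hd.
  assert (Hne : forall z, (0 < enorm z)%Z -> z <> e0) by (intros z Hz ->; cbn in Hz; lia).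
  set (N := enorm u) in *; set (Q := enorm u0) in *.
  (* By [enorm_edot_edet], equal normalised inner products force equal determinants up to
     sign; the sign decides between a rotation and a reflection. *)
  assert (Ht : ((edet u v * Q - edet u0 v0 * N) * (edet u v * Q + edet u0 v0 * N) = 0)%Z).
  { pose proof (enorm_edot_edet u v) as L1; pose proof (enorm_edot_edet u0 v0) as L2.
    rewrite <- Huv in L1; rewrite <- Hu0v0 in L2; fold N Q in L1, L2.
    enough (Hsq : (3 * ((edet u v * Q) * (edet u v * Q)) =
                   3 * ((edet u0 v0 * N) * (edet u0 v0 * N)))%Z) by lia.
    transitivity (Q * Q * (4 * N * N) - (edot u v * Q) * (edot u v * Q))%Z;
      [rewrite L1; ring|].
    rewrite Hd; transitivity (N * N * (4 * Q * Q) - (edot u0 v0 * N) * (edot u0 v0 * N))%Z;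
      [ring|rewrite L2; ring]. }
  apply Z.mul_eq_0 in Ht as [Ht|Ht].
  - destruct (ideal_unit_cross_mul u v u0 v0 Hunit (Hne u0 Hu0)) as [b Hb];
      [apply cross_eq_of_shape; auto; lia|].
    exists b; now left.
  - destruct (ideal_unit_cross_mul (econj u) (econj v) u0 v0 Hunit (Hne u0 Hu0)) as [b [Hbu Hbv]].
    { apply cross_eq_of_shape; rewrite ?enorm_conj, ?edot_conj, ?edet_conj; auto.
      - apply Hne; now rewrite enorm_conj.
      - fold N; lia. }
    exists b; right; now rewrite <- Hbu, <- Hbv, !econjK.
Qed.

Lemma C_h_class_scaled_image th m n L : good_pair th m n -> C_h_class th L ->
  exists k a b c d, (0 < k)%Z /\ orth2 a b c d /\
    L = lin_image (sqrt (IZR k)) a b c d (Gamma_th m n).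
Proof.
  intros Hgood [[_ Hsub] Hang].
  destruct (hex_sublattice_basis L th Hsub Hang)
    as [_ [u [v [HL [_ [Huv [Hu [_ Hcos]]]]]]]].
  apply good_pair_iff in Hgood as [Hadm Hc].
  destruct (admissible_bounds m n Hadm) as [HQ _].
  destruct (gam_w_shape m n) as [Hu0 [Hw0 [Hd0 _]]].
  destruct (same_angle_multiple u v (gam_u m n) (gam_w m n) (gam_w_ideal_unit m n Hadm))
    as [b Hb]; try congruence; try lia.
  { apply eq_IZR; rewrite !mult_IZR, Hd0, Hu0.
    replace (IZR (edot u v)) with (2 * (cos th * IZR (enorm u))) by lra.
    replace (IZR (Z.abs (cos_num m n))) with (2 * (cos th * IZR (enorm (m, n)))) by lra.
    ring. }
  assert (Hb0 : b <> e0).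
  { intros ->; destruct Hb as [[E _]|[E _]]; rewrite E in Hu; cbn in Hu; lia. }
  exists (enorm b); rewrite HL, Gamma_th_emb.
  destruct Hb as [[-> ->]|[-> ->]];
    [destruct (emul_similar b Hb0 (gam_u m n) (gam_w m n)) as [a [c [d [e [Ho E]]]]]
    |destruct (conj_emul_similar b Hb0 (gam_u m n) (gam_w m n)) as [a [c [d [e [Ho E]]]]]];
    exists a, c, d, e; split; [now apply enorm_gt0| |now apply enorm_gt0|]; now split.
Qed.

Lemma lat_min_scaled_image_ge k a b c d G g0 r : (0 < k)%Z -> orth2 a b c d ->
  minimal_vec G g0 -> lat_min (lin_image (sqrt (IZR k)) a b c d G) r -> norm2 g0 <= r.
Proof.
  intros Hk Ho [_ [Hg0 Hmin]] [[y [[q [Gq ->]] [Hy0 <-]]] _].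
  fold (lin_map (sqrt (IZR k)) a b c d q) in Hy0 |- *.
  assert (Hal : sqrt (IZR k) <> 0) by (apply Rgt_not_eq, sqrt_lt_R0, IZR_lt; lia).
  rewrite (lin_map_eq0 _ _ _ _ _ Hal Ho) in Hy0.
  rewrite norm2_lin, sqrt_sqrt by (exact Ho || (apply IZR_le; lia)).
  pose proof (Hmin q Gq Hy0); pose proof (norm2_gt0 g0 Hg0).
  assert (1 <= IZR k) by (apply IZR_le; lia); nra.
Qed.

Lemma hex_index_scaled_image_ge k a b c d u v i : (0 < k)%Z -> orth2 a b c d ->
  hex_index (lin_image (sqrt (IZR k)) a b c d (lat u v)) i ->
  Rabs (det2 u v) / (sqrt 3 / 2) <= i.
Proof.
  intros Hk Ho [u' [v' [Hd [HL ->]]]].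
  assert (Lu : lat u' v' u') by apply lat_l; assert (Lv : lat u' v' v') by apply lat_r.
  rewrite <- HL in Lu, Lv; destruct Lu as [q1 [G1 ->]]; destruct Lv as [q2 [G2 ->]].
  fold (lin_map (sqrt (IZR k)) a b c d q1) (lin_map (sqrt (IZR k)) a b c d q2) in Hd |- *.
  rewrite det2_lin, sqrt_sqrt in * by (apply IZR_le; lia).
  destruct (det2_lat u v q1 q2 G1 G2) as [K HK]; rewrite HK in *.
  assert (HK0 : K <> 0%Z) by (intros ->; apply Hd; ring).
  pose proof (orth2_det_sq a b c d Ho) as Hod.
  assert (Ha : Rabs (a * d - b * c) = 1)
    by (destruct (Rle_dec 0 (a * d - b * c)); [rewrite Rabs_pos_eq|rewrite Rabs_left]; nra).
  assert (HKa : 1 <= Rabs (IZR K)) by (rewrite <- abs_IZR; apply IZR_le; lia).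
  assert (Hkr : 1 <= IZR k) by (apply IZR_le; lia).
  rewrite !Rabs_mult, Ha, (Rabs_pos_eq (IZR k)) by lra.
  pose proof sqrt3_pos; pose proof (Rabs_pos (det2 u v)).
  apply Rmult_le_compat_r; [apply Rlt_le, Rinv_0_lt_compat; lra|].
  assert (Rabs (det2 u v) <= Rabs (IZR K) * Rabs (det2 u v)) by nra; nra.
Qed.

Lemma C_h_good_pair th : C_h th -> exists m n, good_pair th m n.
Proof.
  intros [_ [G [[_ Hsub] Hang]]].
  destruct (hex_sublattice_basis G th Hsub Hang)
    as [_ [u [v [_ [Ht [Huv [Hu [Hd Hcos]]]]]]]].
  destruct (reduced_basis_admissible u v Huv Hu Ht Hd) as [m [n [Hadm Hr]]].
  exists m, n; apply good_pair_iff; split; [exact Hadm|].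
  destruct (admissible_bounds m n Hadm) as [HQ _].
  apply IZR_lt in Hu, HQ; apply (f_equal IZR) in Hr; rewrite !mult_IZR in Hr.
  apply (Rmult_eq_reg_r (IZR (enorm u))); [|lra].
  transitivity (IZR (edot u v) / 2 * IZR (enorm (m, n))); [rewrite <- Hcos; ring|].
  rewrite <- Rmult_div_swap, Hr; field.
Qed.

Lemma good_pair_C_h th m n : PI / 3 <= th <= PI / 2 -> good_pair th m n -> C_h th.
Proof.
  intros Hth Hgood; pose proof (Gamma_lat_angle th m n Hth Hgood) as Hang.
  split; [exact Hth|]; exists (Gamma_th m n); repeat split; try exact Hang.
  - now apply (lat_angle_WR _ th).
  - rewrite Gamma_th_emb; apply subset2_lat_emb.
Qed.

Lemma norm2_gam_u m n : norm2 (emb (gam_u m n)) = IZR n ^ 2 - IZR m * IZR n + IZR m ^ 2.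
Proof. rewrite norm2_emb; unfold gam_u, enorm; cbn [fst snd]; push_IZR; ring. Qed.

Lemma Gamma_lat_min m n : admissible m n ->
  lat_min (Gamma_th m n) (IZR n ^ 2 - IZR m * IZR n + IZR m ^ 2).
Proof.
  intro Hadm; destruct (Gamma_minimal_basis m n Hadm) as [_ [[Lu [Hu0 Hmin]] _]].
  rewrite <- norm2_gam_u; split; [exists (emb (gam_u m n))|]; auto.
Qed.

Lemma Gamma_det_index m n : admissible m n ->
  Rabs (det2 (emb (gam_u m n)) (emb (gam_w m n))) / (sqrt 3 / 2) = (2 * IZR m - IZR n) * IZR n.
Proof.
  intro Hadm; destruct (admissible_bounds m n Hadm) as [_ [_ Hi]].
  destruct (gam_w_shape m n) as [_ [_ [_ Ht]]].
  pose proof sqrt3_pos; rewrite det2_emb.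
  replace (Rabs (IZR (edet (gam_u m n) (gam_w m n)) * sqrt 3 / 2))
    with (IZR (Z.abs (edet (gam_u m n) (gam_w m n))) * (sqrt 3 / 2)).
  - rewrite Ht, Z.abs_eq by lia; push_IZR; field; lra.
  - rewrite abs_IZR, <- (Rabs_pos_eq (sqrt 3 / 2)), <- Rabs_mult by lra; f_equal; field.
Qed.

Lemma Gamma_hex_index m n : admissible m n ->
  hex_index (Gamma_th m n) ((2 * IZR m - IZR n) * IZR n).
Proof.
  intro Hadm; destruct (Gamma_minimal_basis m n Hadm) as [Ht _].
  exists (emb (gam_u m n)), (emb (gam_w m n)); split; [now apply det2_emb_neq0|].
  split; [apply Gamma_th_emb|symmetry; now apply Gamma_det_index].
Qed.

Section GammaTheta.
Variables (th : R) (m n : Z).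
Hypotheses (Hth : PI / 3 <= th <= PI / 2) (Hgood : good_pair th m n).

Let Hadm : admissible m n := good_pair_admissible th m n Hgood.

Lemma C_h_class_iff_scaled_image L : C_h_class th L <->
  exists (k : Z) (a b c d : R), (0 < k)%Z /\ orth2 a b c d /\
    L = lin_image (sqrt (IZR k)) a b c d (Gamma_th m n) /\ subset2 L hex.
Proof.
  split.
  - intro HL; destruct (C_h_class_scaled_image th m n L Hgood HL)
      as [k [a [b [c [d [Hk [Ho HE]]]]]]].
    exists k, a, b, c, d; split; [|split; [|split]]; try assumption; apply HL.
  - intros [k [a [b [c [d [Hk [Ho [-> Hs]]]]]]]].
    assert (Hang : lat_angle (lin_image (sqrt (IZR k)) a b c d (Gamma_th m n)) th).
    { apply lat_angle_lin_image, Gamma_lat_angle; try assumption.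
      apply Rgt_not_eq, sqrt_lt_R0, IZR_lt; exact Hk. }
    split; [split|]; try assumption; now apply (lat_angle_WR _ th).
Qed.

Lemma C_h_class_iff_similar L : C_h_class th L <-> WR_hex L /\ similar (Gamma_th m n) L.
Proof.
  split.
  - intro HL; split; [apply HL|].
    destruct (proj1 (C_h_class_iff_scaled_image L) HL) as [k [a [b [c [d [Hk [Ho [HE _]]]]]]]].
    exists (sqrt (IZR k)), a, b, c, d; split; [|split]; try assumption.
    apply Rgt_not_eq, sqrt_lt_R0, IZR_lt; exact Hk.
  - intros [HW [al [a [b [c [d [Hal [Ho ->]]]]]]]].
    split; [exact HW|]; now apply lat_angle_lin_image, Gamma_lat_angle.
Qed.

Lemma C_h_class_lat_min_ge L r : C_h_class th L -> lat_min L r ->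
  IZR n ^ 2 - IZR m * IZR n + IZR m ^ 2 <= r.
Proof.
  intros HL Hr; destruct (proj1 (C_h_class_iff_scaled_image L) HL)
    as [k [a [b [c [d [Hk [Ho [-> _]]]]]]]].
  rewrite <- norm2_gam_u; apply (lat_min_scaled_image_ge k a b c d (Gamma_th m n)); auto.
  apply Gamma_minimal_basis, Hadm.
Qed.

Lemma C_h_class_hex_index_ge L i : C_h_class th L -> hex_index L i ->
  (2 * IZR m - IZR n) * IZR n <= i.
Proof.
  intros HL Hi; destruct (proj1 (C_h_class_iff_scaled_image L) HL)
    as [k [a [b [c [d [Hk [Ho [-> _]]]]]]]].
  rewrite <- (Gamma_det_index m n Hadm); rewrite Gamma_th_emb in Hi.
  exact (hex_index_scaled_image_ge k a b c d _ _ i Hk Ho Hi).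
Qed.

End GammaTheta.

Theorem theorem1p1 :
  (forall th : R, PI / 3 <= th <= PI / 2 ->
     (C_h th <-> exists m n : Z, good_pair th m n)) /\
  (forall (th : R) (m n : Z), C_h th -> good_pair th m n ->
     let G := Gamma_th m n in
     subset2 G hex /\
     (forall L, C_h_class th L <-> (WR_hex L /\ similar G L)) /\
     lat_min G (IZR n ^ 2 - IZR m * IZR n + IZR m ^ 2) /\
     (forall L r, C_h_class th L -> lat_min L r ->
        IZR n ^ 2 - IZR m * IZR n + IZR m ^ 2 <= r) /\
     hex_index G ((2 * IZR m - IZR n) * IZR n) /\
     (forall L i, C_h_class th L -> hex_index L i ->
        (2 * IZR m - IZR n) * IZR n <= i) /\
     (forall L, C_h_class th L <->
        exists (k : Z) (a b c d : R), (0 < k)%Z /\ orth2 a b c d /\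
          L = lin_image (sqrt (IZR k)) a b c d G /\ subset2 L hex)).
Proof.
  split.
  - intros th Hth; split; [apply C_h_good_pair|].
    intros [m [n Hgood]]; exact (good_pair_C_h th m n Hth Hgood).
  - intros th m n [Hth _] Hgood; cbv zeta.
    pose proof (good_pair_admissible th m n Hgood) as Hadm.
    split; [rewrite Gamma_th_emb; apply subset2_lat_emb|].
    split; [exact (C_h_class_iff_similar th m n Hth Hgood)|].
    split; [exact (Gamma_lat_min m n Hadm)|].
    split; [exact (C_h_class_lat_min_ge th m n Hth Hgood)|].
    split; [exact (Gamma_hex_index m n Hadm)|].
    split; [exact (C_h_class_hex_index_ge th m n Hth Hgood)|].
    exact (C_h_class_iff_scaled_image th m n Hth Hgood).
Qed.
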